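(* Let $G$ be a finite group of order $n\ge3$ and $S\subseteq G\setminus\{1\}$ an inverse-closed normal subset such that $\Gamma=\operatorname{Cay}(G,S)$ is connected. Then both $\operatorname{Deg}(\Gamma)$ and $\operatorname{Deg}_D(\Gamma)$ divide $\varphi(n)/2$.
   Context: $S$ normal means $gSg^{-1}=S$ for all $g\in G$. $\operatorname{Cay}(G,S)$ has vertex set $G$ with $u\sim v$ iff $uv^{-1}\in S$. $\operatorname{Deg}(\Gamma)$ (resp. $\operatorname{Deg}_D(\Gamma)$) is the degree over $\mathbb{Q}$ of the smallest subfield of $\mathbb{C}$ containing all eigenvalues of the adjacency matrix (resp. the distance matrix, whose $(u,v)$-entry is the graph distance). $\varphi$ is Euler's totient. *)

From HB Require Import structures.
From mathcomp Require Import all_boot all_order all_algebra all_fingroup all_field.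
Set Implicit Arguments. Unset Strict Implicit. Unset Printing Implicit Defensive.
Import GRing.Theory Num.Theory.
Local Open Scope ring_scope.

(* Degree over Q of the smallest subfield of C containing all elements of s:
   the Q-dimension of the number field Q(s), realised (via algnum's
   num_field_exists) as a fieldExtType over rat embedded in algC and
   generated by a preimage of s. *)
Definition deg_gen (s : seq algC) : nat :=
  \dim {: projT1 (num_field_exists s)}%VS.

Definition eigs (m : nat) (A : 'M[algC]_m) : seq algC :=
  sval (closed_field_poly_normal (char_poly A)).

Section Cayley.
Variables (gT : finGroupType) (S : {set gT}).

Definition cay_adj : rel gT := fun u v => (u * v^-1)%g \in S.

Fixpoint cay_walk (k : nat) (u v : gT) : bool :=
  if k is k'.+1 then [exists w, cay_adj u w && cay_walk k' w v] else u == v.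

Definition cay_connected : Prop := forall u v : gT, connect cay_adj u v.

(* graph distance: least k with a walk of length k (for a connected graph
   on #|gT| vertices this is < #|gT|). *)
Definition cay_dist (u v : gT) : nat :=
  find (fun k => cay_walk k u v) (iota 0 #|gT|).

Definition vtx (i : 'I_#|gT|) : gT := enum_val i.

Definition cay_adjmx : 'M[algC]_#|gT| :=
  \matrix_(i, j) (if cay_adj (vtx i) (vtx j) then 1 else 0).

Definition cay_distmx : 'M[algC]_#|gT| :=
  \matrix_(i, j) (cay_dist (vtx i) (vtx j))%:R.

Definition Deg : nat := deg_gen (eigs cay_adjmx).
Definition DegD : nat := deg_gen (eigs cay_distmx).
End Cayley.

From HB Require Import structures.
From mathcomp Require Import ring.
From mathcomp Require Import all_boot all_order all_algebra all_fingroup all_field all_solvable all_character.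
Set Implicit Arguments. Unset Strict Implicit. Unset Printing Implicit Defensive.
Import GRing.Theory Num.Theory.
Local Open Scope ring_scope.

(* Both matrices have the form [(f (u v^-1))_(u,v)] for a
   nat-valued class function [f] with [f x^-1 = f x] ([f] is the indicator of
   [S], resp. the distance to [1]).  Such a group matrix commutes with the
   central idempotents [e_chi] of the group algebra, which sum to the identity,
   and acts on the image of [e_chi] as the scalar
   [sum_x f x * (chi x)^* / chi 1]; so these are all its eigenvalues.
   Character values lie in the cyclotomic field [Q(w)], [w] a primitive
   [#|G|]-th root of unity, and inverse invariance of [f] makes the eigenvalues
   real, so they lie in the maximal real subfield [Q(w + w^-1)], which has
   degree [totient #|G| / 2] because [w] is not real once [#|G| > 2].  The
   field they generate is then an intermediate field, whose degree divides
   that of [Q(w + w^-1)]. *)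

Section SubfieldImage.
Variables (L : fieldExtType rat) (LC : {rmorphism L -> algC}) (F : {subfield L}).

Definition in_img (c : algC) := exists2 y, y \in F & LC y = c.

Lemma in_img_rat a : in_img (ratr a).
Proof.
exists a%:A; first by rewrite rpredZ ?mem1v.
by rewrite alg_num_field fmorph_rat.
Qed.

Lemma in_img_nat m : in_img m%:R.
Proof. by rewrite -(rmorph_nat (@ratr algC)); apply: in_img_rat. Qed.

Lemma in_imgD c1 c2 : in_img c1 -> in_img c2 -> in_img (c1 + c2).
Proof. by move=> [y1 F1 <-] [y2 F2 <-]; exists (y1 + y2); rewrite ?rpredD ?rmorphD. Qed.

Lemma in_imgM c1 c2 : in_img c1 -> in_img c2 -> in_img (c1 * c2).
Proof. by move=> [y1 F1 <-] [y2 F2 <-]; exists (y1 * y2); rewrite ?rpredM ?rmorphM. Qed.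

Lemma in_imgX c k : in_img c -> in_img (c ^+ k).
Proof. by move=> [y Fy <-]; exists (y ^+ k); rewrite ?rpredX ?rmorphXn. Qed.

Lemma in_imgV c : in_img c -> in_img c^-1.
Proof. by move=> [y Fy <-]; exists y^-1; rewrite ?memvV ?fmorphV. Qed.

Lemma in_img_sum (I : Type) (r : seq I) (P : pred I) (G : I -> algC) :
  (forall i, P i -> in_img (G i)) -> in_img (\sum_(i <- r | P i) G i).
Proof.
move=> FG; apply: (big_ind in_img) => //; last exact: in_imgD.
exact: (in_img_nat 0).
Qed.

Lemma in_img_adjoin (K : fieldExtType rat) (KC : {rmorphism K -> algC}) xs
    (E : {subfield K}) :
  (forall v, v \in E -> in_img (KC v)) -> (forall x, x \in xs -> in_img (KC x)) ->
  forall v, v \in <<E & xs>>%VS -> in_img (KC v).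
Proof.
elim: xs E => [|x xs IHxs] E FE Fxs v; first by rewrite adjoin_nil subfield_closed; apply: FE.
rewrite adjoin_cons; apply: IHxs => [u /Fadjoin_polyP [p Ep ->]|y xs_y]; last first.
  by apply: Fxs; rewrite inE xs_y orbT.
rewrite horner_coef rmorph_sum; apply: in_img_sum => i _.
rewrite rmorphM rmorphXn; apply: in_imgM; first by apply/FE/polyOverP.
by apply/in_imgX/Fxs; rewrite inE eqxx.
Qed.

(* The number field [Q(s)] embeds into [F] over [Q], by transporting each
   element along [LC]. *)
Lemma deg_gen_dvdn s : (forall c, c \in s -> in_img c) -> (deg_gen s %| \dim F)%N.
Proof.
move=> Fs; rewrite /deg_gen; case: (num_field_exists s) => Qs [QsC [s1 Ds1 gen_s1]] /=.
have F_QsC v : in_img (QsC v).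
  apply: (@in_img_adjoin _ QsC s1 1%AS); last by rewrite gen_s1 memvf.
    by move=> _ /vlineP [a ->]; rewrite alg_num_field fmorph_rat; apply: in_img_rat.
  by move=> x s1x; apply: Fs; rewrite -Ds1 map_f.
pose f y := sval (sig2_eqW (F_QsC y)).
have fF y : f y \in F by rewrite /f; case: (sig2_eqW _).
have fC y : LC (f y) = QsC y by rewrite /f; case: (sig2_eqW _).
have f_add : zmod_morphism f.
  by move=> x y; apply: (fmorph_inj LC); rewrite !(fC, rmorphB).
have f_mul : monoid_morphism f.
  by split=> [|x y]; apply: (fmorph_inj LC); rewrite ?fC ?rmorph1 // !rmorphM /= !fC.
pose fZ := GRing.isZmodMorphism.Build Qs L f f_add.
pose fM := GRing.isMonoidMorphism.Build Qs L f f_mul.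
pose fR : {rmorphism _ -> _} := HB.pack f fZ fM.
pose fS := GRing.isScalable.Build rat Qs L *:%R f (fmorph_numZ fR).
pose fLR : {lrmorphism _ -> _} := HB.pack f fZ fM fS.
pose fA := AHom (linfun_is_ahom fLR).
have fAE y : fA y = f y by exact: (lfunE fLR y).
have fA_inj : lker fA == 0%VS.
  by apply/lker0P => x y; rewrite !fAE; apply: (fmorph_inj fR).
have -> : \dim {:Qs} = \dim (fA @: fullv)%VS by rewrite limg_dim_eq // (eqP fA_inj) capv0.
rewrite -gen_s1 aimg_adjoin_seq aimg1; apply/field_dimS/Fadjoin_seqP.
by split=> [|_ /mapP [y _ ->]]; rewrite ?sub1v ?fAE.
Qed.

End SubfieldImage.

Lemma size_minPoly1 (L : fieldExtType rat) (LC : {rmorphism L -> algC}) x :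
  size (minPoly 1 x) = size (minCpoly (LC x)).
Proof.
have [r [-> mon_r] dv_r] := minCpolyP (LC x); rewrite size_map_poly.
have [q Dq] := polyOver1P (minPolyOver 1 x).
have LC_alg (p : {poly rat}) : map_poly LC (map_poly (in_alg L) p) = map_poly ratr p.
  rewrite -map_poly_comp; apply: eq_map_poly => a.
  by rewrite /= rmorphZ_num rmorph1 mulr1.
have q_neq0 : q != 0 by rewrite -(map_poly_eq0 (in_alg L)) -Dq monic_neq0 ?monic_minPoly.
have szq : size (minPoly 1 x) = size q by rewrite Dq size_map_poly.
apply/eqP; rewrite eqn_leq; apply/andP; split.
  rewrite -(size_map_poly (in_alg L) r) dvdp_leq ?map_poly_eq0 ?monic_neq0 //.
  by rewrite minPoly_dvdp ?alg_polyOver // -(fmorph_root LC) LC_alg dv_r.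
by rewrite szq dvdp_leq // -dv_r -LC_alg -Dq fmorph_root root_minPoly.
Qed.

Lemma conjC_unity_root n (z : algC) : (0 < n)%N -> n.-unity_root z -> z^* = z^-1.
Proof.
move=> n_gt0 /unity_rootP zn1; have z1 : `|z| = 1.
  by apply/eqP; rewrite -(pexpr_eq1 n_gt0) // -normrX zn1 normr1.
by rewrite invC_norm z1 expr1n invr1 mul1r.
Qed.

Section MaxRealSubfield.
Variables (L : fieldExtType rat) (LC : {rmorphism L -> algC}) (n : nat) (w : L).
Hypotheses (n_gt2 : (2 < n)%N) (prim_w : n.-primitive_root w).
Hypothesis gen_w : <<1; w>>%VS = fullv.

Local Notation zeta := (LC w).

Definition real_subfield : {subfield L} := <<1; w + w^-1>>%AS.

Let prim_zeta : n.-primitive_root zeta.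
Proof. by rewrite fmorph_primitive_root. Qed.

Let w_neq0 : w != 0.
Proof. by rewrite (prim_root_eq0 prim_w) -lt0n (prim_order_gt0 prim_w). Qed.

Let conj_zeta : zeta^* = zeta^-1.
Proof.
apply: (conjC_unity_root (prim_order_gt0 prim_zeta)).
by rewrite unity_rootE prim_expr_order.
Qed.

Let zeta_not_real : zeta^* != zeta.
Proof.
rewrite conj_zeta; apply/eqP => zetaV.
have /eqP : zeta ^+ 2 = 1 by rewrite expr2 -{1}zetaV mulVf ?fmorph_eq0.
by rewrite -(prim_order_dvd prim_zeta) => /(dvdn_leq (isT : (0 < 2)%N)); rewrite leqNgt n_gt2.
Qed.

Lemma conjC_real_subfield y : y \in real_subfield -> (LC y)^* = LC y.
Proof.
have conj_gen : (LC (w + w^-1))^* = LC (w + w^-1).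
  by rewrite rmorphD fmorphV /= rmorphD /= fmorphV /= conj_zeta invrK addrC.
move=> /Fadjoin_polyP [p Fp ->]; rewrite horner_coef !rmorph_sum; apply: eq_bigr => i _.
have /vlineP [a ->] := polyOverP Fp i.
by rewrite !rmorphM !rmorphXn /= conj_gen alg_num_field !fmorph_rat.
Qed.

Lemma prim_root_notin_real_subfield : w \notin real_subfield.
Proof. by apply/negP => /conjC_real_subfield; apply/eqP. Qed.

(* [w] is a root of [X^2 - (w + w^-1) X + 1]. *)
Lemma adjoin_degree_real_subfield : adjoin_degree real_subfield w = 2%N.
Proof.
pose P : {poly L} := 'X^2 - (w + w^-1)%:P * 'X + 1.
have P_over : P \is a polyOver real_subfield.
  by rewrite rpredD ?rpredB ?rpredM ?rpredX ?polyOverX ?rpred1 ?polyOverC ?memv_adjoin.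
have P_w : root P w by rewrite /root !hornerE mulrDl mulVf //; apply/eqP; ring.
have szP : size P = 3.
  rewrite /P -addrA size_addl ?size_polyXn // (leq_ltn_trans (size_add _ _)) //.
  rewrite gtn_max size_polyN size_polyC oner_neq0 /= andbT.
  by rewrite (leq_ltn_trans (size_mul_leq _ _)) // size_polyX size_polyC; case: (_ != 0).
have P_neq0 : P != 0 by rewrite -size_poly_eq0 szP.
have := dvdp_leq P_neq0 (minPoly_dvdp P_over P_w).
rewrite size_minPoly szP ltnS; move: prim_root_notin_real_subfield.
by rewrite -adjoin_deg_eq1 /adjoin_degree; case: (_.-1) => [|[|[|]]].
Qed.

Lemma adjoin_real_subfield_full : <<real_subfield; w>>%VS = fullv.
Proof. by apply/eqP; rewrite eqEsubv subvf /= -gen_w adjoinSl ?sub1v. Qed.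

Lemma dim_cyclotomic_field : \dim {:L} = totient n.
Proof.
rewrite -gen_w dim_Fadjoin dimv1 muln1; apply: succn_inj.
by rewrite -size_minPoly (size_minPoly1 LC) (minCpoly_cyclotomic prim_zeta) size_cyclotomic.
Qed.

Lemma dim_real_subfield : totient n = (2 * \dim real_subfield)%N.
Proof.
by rewrite -dim_cyclotomic_field -adjoin_real_subfield_full dim_Fadjoin adjoin_degree_real_subfield.
Qed.

(* Over [real_subfield], every [y] is [a + b w]; conjugation fixes [a], [b]
   and moves [zeta], so [b = 0] when [LC y] is real. *)
Lemma mem_real_subfield y : (y \in real_subfield) = ((LC y)^* == LC y).
Proof.
apply/idP/eqP => [/conjC_real_subfield // | y_real].
have y_full : y \in <<real_subfield; w>>%VS by rewrite adjoin_real_subfield_full memvf.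
set p := Fadjoin_poly real_subfield w y.
have p_over := Fadjoin_polyOver real_subfield w y.
have szp : (size p <= 2)%N by rewrite -adjoin_degree_real_subfield size_Fadjoin_poly.
have Dy : y = p`_0 + p`_1 * w.
  rewrite -(Fadjoin_poly_eq y_full) -/p (horner_coef_wide _ szp).
  by rewrite big_ord_recr big_ord1 /= expr0 mulr1 expr1.
have p0 := polyOverP p_over 0; have p1 := polyOverP p_over 1.
suff p1_0 : p`_1 = 0 by rewrite Dy p1_0 mul0r addr0.
apply: (fmorph_inj LC); rewrite rmorph0; apply: contraNeq zeta_not_real => LCp1_neq0.
move: y_real; rewrite Dy !rmorphD !rmorphM /= !(conjC_real_subfield p0, conjC_real_subfield p1).
by move=> /addrI /(mulfI LCp1_neq0) ->.
Qed.

End MaxRealSubfield.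

Section GroupMatrix.
Variable gT : finGroupType.
Local Notation G := [set: gT]%G.
Local Notation N := #|gT|.

Definition group_mx (f : gT -> algC) : 'M[algC]_N :=
  \matrix_(i, j) f (vtx i * (vtx j)^-1)%g.

Definition gconv (f g : gT -> algC) x := \sum_h f h * g (h^-1 * x)%g.

Definition cent_idem (i : Iirr G) x := 'chi[G]_i 1%g * 'chi[G]_i x / N%:R.

Definition eigval (f : gT -> algC) (i : Iirr G) :=
  (\sum_x f x * ('chi[G]_i x)^*) / 'chi[G]_i 1%g.

Lemma sum_vtx (F : gT -> algC) : \sum_(k < N) F (vtx k) = \sum_y F y.
Proof. by rewrite -(big_enum_val F). Qed.

Lemma sum_setT (F : gT -> algC) : \sum_(x in G) F x = \sum_x F x.
Proof. by apply: eq_bigl => x; rewrite inE. Qed.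

Lemma group_mxM f g : group_mx f *m group_mx g = group_mx (gconv f g).
Proof.
apply/matrixP => i j; rewrite !mxE.
under eq_bigr do rewrite !mxE.
rewrite (sum_vtx (fun y => f (vtx i * y^-1)%g * g (y * (vtx j)^-1)%g)) /gconv.
rewrite (reindex_inj (inj_comp (mulIg (vtx i)) (@invg_inj gT))) /=.
by apply: eq_bigr => h _; rewrite invMg invgK mulKVg mulgA.
Qed.

Lemma group_mxZ c f : group_mx (fun x => c * f x) = c *: group_mx f.
Proof. by apply/matrixP => i j; rewrite !mxE. Qed.

(* The column orthogonality relation at [u v^-1]. *)
Lemma sum_cent_idem : \sum_i group_mx (cent_idem i) = 1%:M.
Proof.
apply/matrixP => i j; rewrite summxE !mxE.
under eq_bigr do rewrite mxE.
have := second_orthogonality_relation (vtx i * (vtx j)^-1)%g (in_setT 1%g).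
rewrite class1G inE -eq_mulgV1 (inj_eq enum_val_inj) => orth.
rewrite /cent_idem -mulr_suml.
under eq_bigr do rewrite mulrC -(conj_Creal (Rreal_nat (Cnat_irr1 _))).
rewrite orth; case: eqP => [<-|_]; last by rewrite mul0r.
by rewrite mulgV cent11T setIT cardsT mulr1n mulfV // -cardsT (neq0CG G).
Qed.

Section ClassFunction.
Variable f : gT -> algC.
Hypothesis f_class : forall x y, f (x ^ y)%g = f x.

(* Expand [f] in the irreducible characters; the generalized orthogonality
   relation kills every term but the [i]-th. *)
Lemma gconv_irr i x : gconv f 'chi[G]_i x = eigval f i * 'chi[G]_i x.
Proof.
have cfP : is_class_fun <<G>>%g [ffun x => f x].
  by rewrite genGid; apply: intro_class_fun => [a b _ _ | a]; rewrite ?f_class ?inE.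
pose phi : 'CF(G) := Cfun 0 cfP.
have phiE y : phi y = f y by rewrite cfunE.
have orth j : \sum_k 'chi[G]_i (k * x)%g * 'chi[G]_j (k^-1)%g
    = #|G|%:R * ((i == j)%:R * ('chi_i x / 'chi_i 1%g)).
  by rewrite -(generalized_orthogonality_relation x i j) sum_setT mulVKf ?neq0CG.
rewrite /gconv (reindex_inj (@invg_inj gT)) /=.
under eq_bigr do rewrite -phiE invgK mulrC.
rewrite [phi]cfun_sum_cfdot.
under eq_bigr do rewrite sum_cfunE mulr_sumr.
rewrite exchange_big /=.
under eq_bigr do under eq_bigr do rewrite cfunE mulrCA.
under eq_bigr do rewrite -mulr_sumr.
rewrite (bigD1 i) //= orth eqxx mul1r big1 => [|j /negPf nji]; last first.
  by rewrite orth eq_sym nji mul0r !mulr0.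
rewrite addr0 /eigval cfdotE sum_setT.
under eq_bigr do rewrite phiE.
by field; rewrite irr1_neq0 (neq0CG G).
Qed.

Lemma gconv_cent_idem i x : gconv f (cent_idem i) x = eigval f i * cent_idem i x.
Proof.
have cent_idemE y : cent_idem i y = 'chi[G]_i 1%g / N%:R * 'chi[G]_i y.
  by rewrite /cent_idem mulrAC.
rewrite cent_idemE mulrCA -gconv_irr /gconv mulr_sumr.
by apply: eq_bigr => h _; rewrite cent_idemE mulrCA.
Qed.

Lemma group_mx_cent_idem i :
  group_mx f *m group_mx (cent_idem i) = eigval f i *: group_mx (cent_idem i).
Proof.
rewrite group_mxM -group_mxZ.
by apply/matrixP => j k; rewrite !mxE gconv_cent_idem.
Qed.

(* A left eigenvector [v] is nonzero on some [group_mx (cent_idem i)], whose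
   image is the [eigval f i]-eigenspace. *)
Lemma eigenvalue_group_mx l : root (char_poly (group_mx f)) l -> exists i, l = eigval f i.
Proof.
rewrite -eigenvalue_root_char => /eigenvalueP [v v_eig v_neq0].
have [i vi_neq0] : exists i, v *m group_mx (cent_idem i) != 0.
  apply/existsP; apply: contraR v_neq0 => /existsPn vi0.
  rewrite -[v]mulmx1 -sum_cent_idem mulmx_sumr big1 // => i _.
  exact/eqP/negbNE/vi0.
exists i; apply/eqP; rewrite -subr_eq0.
have : (l - eigval f i) *: (v *m group_mx (cent_idem i)) = 0.
  by rewrite scalerBl scalemxAl -v_eig -mulmxA group_mx_cent_idem scalemxAr subrr.
by move/eqP; rewrite scaler_eq0 (negbTE vi_neq0) orbF.
Qed.

End ClassFunction.

Lemma conjC_eigval f i :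
  (forall x, (f x)^* = f x) -> (forall x, f (x^-1)%g = f x) -> (eigval f i)^* = eigval f i.
Proof.
move=> f_real f_inv; rewrite /eigval fmorph_div /= (conj_Creal (Rreal_nat (Cnat_irr1 i))).
congr (_ / _); rewrite rmorph_sum /= (reindex_inj (@invg_inj gT)) /=.
by apply: eq_bigr => x _; rewrite rmorphM /= conjCK f_real f_inv irr_inv.
Qed.

End GroupMatrix.

Lemma eigs_root m (A : 'M[algC]_m) c : c \in eigs A -> root (char_poly A) c.
Proof.
rewrite /eigs; case: (closed_field_poly_normal _) => r /= -> r_c.
by rewrite rootZ ?root_prod_XsubC // (monicP (char_poly_monic A)) oner_neq0.
Qed.

Lemma deg_group_mx_dvdn (gT : finGroupType) (f : gT -> nat) :
  (2 < #|gT|)%N -> (forall x y, f (x ^ y)%g = f x) -> (forall x, f (x^-1)%g = f x) ->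
  (deg_gen (eigs (group_mx (fun x => (f x)%:R))) %| totient #|gT| %/ 2)%N.
Proof.
move=> n_gt2 f_class f_inv.
have [L _ [LC _ [w [prim_w gen_w] LC_char]]] := group_num_field_exists [set: gT]%G.
rewrite cardsT in prim_w.
rewrite (dim_real_subfield LC n_gt2 prim_w gen_w) mulKn //.
have img_irr i x : in_img LC {:L}%AS ('chi[[set: gT]]_i x).
  have [a <-] := LC_char _ _ _ (irr_char i) x (order_dvdG (in_setT x)).
  by exists a; rewrite ?memvf.
apply: deg_gen_dvdn => _ /eigs_root /eigenvalue_group_mx [x y | i ->].
  by rewrite f_class.
have [y _ LCy] : in_img LC {:L}%AS (eigval (fun x => (f x)%:R) i).
  apply/in_imgM/in_imgV/img_irr; apply: in_img_sum => x _.
  by apply/in_imgM; [apply: in_img_nat | rewrite -irr_inv; apply: img_irr].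
have y_real : (LC y)^* == LC y.
  rewrite LCy conjC_eigval // => x; first by rewrite conjC_nat.
  by rewrite f_inv.
exists y; last exact: LCy.
by rewrite (mem_real_subfield LC n_gt2 prim_w gen_w y).
Qed.

Section CayleyGraph.
Variables (gT : finGroupType) (S : {set gT}).
Hypotheses (S_inv : forall s, s \in S -> (s^-1)%g \in S) (S_norm : forall g : gT, (S :^ g)%g = S).

Lemma cay_adjMr u v x : cay_adj S (u * x)%g (v * x)%g = cay_adj S u v.
Proof. by rewrite /cay_adj invMg mulgA mulgK. Qed.

Lemma cay_adjJ u v y : cay_adj S (u ^ y)%g (v ^ y)%g = cay_adj S u v.
Proof. by rewrite /cay_adj -conjVg -conjMg -{1}(S_norm y) memJ_conjg. Qed.

Lemma cay_adj_sym u v : cay_adj S u v = cay_adj S v u.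
Proof.
suff adj_sym a b : cay_adj S a b -> cay_adj S b a by apply/idP/idP; apply: adj_sym.
by rewrite /cay_adj => /S_inv; rewrite invMg invgK.
Qed.

Lemma cay_walkMr k u v x : cay_walk S k (u * x)%g (v * x)%g = cay_walk S k u v.
Proof.
elim: k u => [|k IHk] u /=; first by rewrite (inj_eq (mulIg x)).
apply/existsP/existsP => [[u' /andP [u_u' u'_v]]|[u' /andP [u_u' u'_v]]].
  by exists (u' * x^-1)%g; rewrite -(cay_adjMr _ _ x) -IHk mulgKV u_u' u'_v.
by exists (u' * x)%g; rewrite cay_adjMr IHk u_u' u'_v.
Qed.

Lemma cay_walkJ k u v y : cay_walk S k (u ^ y)%g (v ^ y)%g = cay_walk S k u v.
Proof.
elim: k u => [|k IHk] u /=; first by rewrite (inj_eq (@conjg_inj _ y)).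
apply/existsP/existsP => [[u' /andP [u_u' u'_v]]|[u' /andP [u_u' u'_v]]].
  by exists (u' ^ y^-1)%g; rewrite -(cay_adjJ _ _ y) -IHk conjgKV u_u' u'_v.
by exists (u' ^ y)%g; rewrite cay_adjJ IHk u_u' u'_v.
Qed.

Lemma cay_walkS k u v :
  cay_walk S k.+1 u v = [exists w, cay_adj S u w && cay_walk S k w v].
Proof. by []. Qed.

Lemma cay_walkSr k u v :
  cay_walk S k.+1 u v = [exists w, cay_walk S k u w && cay_adj S w v].
Proof.
elim: k u => [|k IHk] u.
  apply/existsP/existsP => [[w /andP [u_w /eqP <-]]|[w /andP [/eqP <- w_v]]].
    by exists u; rewrite /= eqxx u_w.
  by exists v; rewrite /= w_v eqxx.
rewrite cay_walkS; apply/existsP/existsP => [[w /andP [u_w]]|[w' /andP []]].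
  rewrite IHk => /existsP [w' /andP [w_w' w'_v]].
  by exists w'; rewrite w'_v andbT cay_walkS; apply/existsP; exists w; rewrite u_w w_w'.
rewrite cay_walkS => /existsP [w /andP [u_w w_w']] w'_v.
by exists w; rewrite u_w IHk; apply/existsP; exists w'; rewrite w_w' w'_v.
Qed.

Lemma cay_walk_sym k u v : cay_walk S k u v = cay_walk S k v u.
Proof.
suff walk_sym a b : cay_walk S k a b -> cay_walk S k b a by apply/idP/idP; apply: walk_sym.
elim: k a b => [|k IHk] a b; first by rewrite /= eq_sym.
rewrite cay_walkS => /existsP [w /andP [a_w w_b]]; rewrite cay_walkSr; apply/existsP; exists w.
by rewrite IHk // cay_adj_sym.
Qed.

Lemma cay_distMr u v : cay_dist S u v = cay_dist S (u * v^-1)%g 1%g.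
Proof. by apply: eq_find => k; rewrite -(cay_walkMr _ _ _ v^-1) mulgV. Qed.

Lemma cay_distJ x y : cay_dist S (x ^ y)%g 1%g = cay_dist S x 1%g.
Proof. by apply: eq_find => k; rewrite /= -{1}(conj1g y) cay_walkJ. Qed.

Lemma cay_distV x : cay_dist S (x^-1)%g 1%g = cay_dist S x 1%g.
Proof. by apply: eq_find => k; rewrite /= -(cay_walkMr _ _ _ x) mulVg mul1g cay_walk_sym. Qed.

Lemma cay_adjmxE : cay_adjmx S = group_mx (fun x => (x \in S : nat)%:R).
Proof. by apply/matrixP => i j; rewrite !mxE /cay_adj; case: (_ \in S). Qed.

Lemma cay_distmxE : cay_distmx S = group_mx (fun x => (cay_dist S x 1%g)%:R).
Proof. by apply/matrixP => i j; rewrite !mxE cay_distMr. Qed.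

End CayleyGraph.

Theorem mainTheorem16 (gT : finGroupType) (S : {set gT}) :
  (3 <= #|gT|)%N ->
  (1%g \notin S) ->
  (forall s, s \in S -> (s^-1)%g \in S) ->
  (forall g : gT, (S :^ g)%g = S) ->
  cay_connected S ->
  (Deg S %| totient #|gT| %/ 2)%N /\ (DegD S %| totient #|gT| %/ 2)%N.
Proof.
move=> n_ge3 _ S_inv S_norm _; split.
  rewrite /Deg cay_adjmxE; apply: deg_group_mx_dvdn => // [x y | x].
    by rewrite -{1}(S_norm y) memJ_conjg.
  by congr (nat_of_bool _); apply/idP/idP => /S_inv; rewrite ?invgK.
rewrite /DegD cay_distmxE; apply: deg_group_mx_dvdn => // [x y | x].
  exact: cay_distJ.
exact: cay_distV.
Qed.
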